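(* Let $S$ be finite and $X\subset S^{\mathbb Z^d}$ a $\mathbb Z^d$-topological Markov shift satisfying condition $\maltese$. Then $X$ satisfies condition $\mho$.
   Context: Notation: $\|n\|=\max_k|n_k|$, $B(n,r)=\{k:\|k-n\|\le r\}$, $F^o=\{x\in F:B(x,1)\subset F\}$, $\partial F=F\setminus F^o$; $X_\Lambda=\{x_\Lambda:x\in X\}$. A $\mathbb Z^d$-TMS is $X=\{x\in S^{\mathbb Z^d}:(x_k,(x_{k+j})_{j\in\partial B(0,1)})\in A\ \forall k\}$ for some $A\subset S\times S^{\partial B(0,1)}$. Tail relation $\mathfrak T(X)=\{(x,y)\in X^2:\exists F\text{ finite},x_{F^c}=y_{F^c}\}$. Let $\sharp:S\to\mathbb Z^S$, $\sharp(s)=e_s$ (standard basis vector), $\Psi_\sharp(x,y)=\sum_j(e_{y_j}-e_{x_j})$ on $\mathfrak T(X)$, and for finite $F$, $a,b\in X_F$, $\Psi_\sharp(a,b)=\sum_{j\in F}(e_{b_j}-e_{a_j})$; $\mathbb H_{X,\sharp}$ is the subgroup generated by $\{\Psi_\sharp(x,y):(x,y)\in\mathfrak T(X)\}$. Condition $\mho$: there is a finite $F\subset\mathbb Z^d$ such that for every $a\in X_F$, the subgroup generated by $\{\Psi_\sharp(a,b):b\in X_F,\ a_{\partial F}=b_{\partial F}\}$ equals $\mathbb H_{X,\sharp}$. Condition $\maltese$: $S=W\uplus Z$ with $Z\neq\emptyset$ such that (i) for every $x\in X$ and $z\in Z$, the configuration $x'$ with $x'_i=x_i$ for $i\neq0$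 and $x'_0=z$ lies in $X$; and (ii) if $a\in X_{[-1,1]^d}$ and $a_i\in Z$ for all $i\in[-1,1]^d\setminus\{0\}$, then for every $s\in S$ the configuration $a^{(s)}$ with $a^{(s)}_i=a_i$ for $i\neq0$ and $a^{(s)}_0=s$ lies in $X_{[-1,1]^d}$. *)

From HB Require Import structures.
From mathcomp Require Import all_boot all_order all_algebra.
From mathcomp Require Import finmap.
Set Implicit Arguments.
Unset Strict Implicit.
Unset Printing Implicit Defensive.
Import Order.TTheory GRing.Theory Num.Theory.
Local Open Scope ring_scope.

Definition site (d : nat) := 'rV[int]_d.

Definition supnorm (d : nat) (n : site d) : nat := (\max_(k < d) absz (n ord0 k))%N.

Definition ball (d : nat) (n : site d) (r : nat) : site d -> Prop :=
  fun k => (supnorm (k - n)%R <= r)%N.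

Definition interior (d : nat) (F : site d -> Prop) : site d -> Prop :=
  fun x => F x /\ (forall k, ball x 1 k -> F k).
Definition boundary (d : nat) (F : site d -> Prop) : site d -> Prop :=
  fun x => F x /\ ~ interior F x.

Definition fmem (d : nat) (F : {fset site d}) : site d -> Prop := fun k => k \in F.

(* A subset of
   S × S^{dB(0,1)} is encoded as a predicate on S × (site d -> S) that only
   depends on the values at sites of dB(0,1) (condition [local_rule]). *)
Definition local_rule (S : finType) (d : nat) (A : S -> (site d -> S) -> Prop) :=
  forall s (f g : site d -> S),
    (forall j, boundary (ball 0 1) j -> f j = g j) -> (A s f <-> A s g).

Definition TMS (S : finType) (d : nat) (A : S -> (site d -> S) -> Prop)
  : (site d -> S) -> Prop :=
  fun x => forall k : site d, A (x k) (fun j => x (k + j)).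

Definition pattern_in (S : finType) (d : nat) (X : (site d -> S) -> Prop)
  (F : site d -> Prop) (a : site d -> S) : Prop :=
  exists x, X x /\ (forall j, F j -> x j = a j).

Definition sharp (S : finType) (s : S) : {ffun S -> int} :=
  [ffun t => ((t == s) : nat)%:Z].

Definition PsiF (S : finType) (d : nat) (F : {fset site d}) (a b : site d -> S)
  : {ffun S -> int} :=
  \sum_(j <- F) (sharp (b j) - sharp (a j)).

Inductive gen (V : zmodType) (P : V -> Prop) : V -> Prop :=
| gen_in : forall v, P v -> gen P v
| gen_0 : gen P 0
| gen_sub : forall u v, gen P u -> gen P v -> gen P (u - v).

Definition tail_rel (S : finType) (d : nat) (X : (site d -> S) -> Prop)
  (x y : site d -> S) : Prop :=
  X x /\ X y /\ exists F : {fset site d}, forall j, j \notin F -> x j = y j.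

(* H_{X,sharp}: generated by Psi_sharp(x,y) = sum_j (e_{y_j} - e_{x_j}),
   (x,y) in T(X); the sum is computed over any finite F off which x,y agree
   (all other terms vanish). *)
Definition H_sharp (S : finType) (d : nat) (X : (site d -> S) -> Prop)
  : {ffun S -> int} -> Prop :=
  gen (fun v => exists x y, X x /\ X y /\
         exists F : {fset site d},
           (forall j, j \notin F -> x j = y j) /\ v = PsiF F x y).

Definition cond_mho (S : finType) (d : nat) (X : (site d -> S) -> Prop) : Prop :=
  exists F : {fset site d},
    forall a, pattern_in X (fmem F) a ->
      forall v,
        gen (fun w => exists b, pattern_in X (fmem F) b /\
                (forall j, boundary (fmem F) j -> a j = b j) /\
                w = PsiF F a b) v
        <-> H_sharp X v.

Definition cond_maltese (S : finType) (d : nat) (X : (site d -> S) -> Prop) : Prop :=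
  exists Z : {set S}, Z != set0 /\
    (forall x (z : S), X x -> z \in Z ->
        X (fun i => if i == 0 then z else x i)) /\
    (forall a : site d -> S, pattern_in X (ball 0 1) a ->
        (forall i, ball 0 1 i -> i != 0 -> a i \in Z) ->
        forall s : S, pattern_in X (ball 0 1) (fun i => if i == 0 then s else a i)).

(** Fix [z] in [Z]. Since [Psi(a, b)] is a sum of terms
    [(e_(b_j) - e_z) - (e_(a_j) - e_z)], it suffices to show that both groups
    of condition mho contain every [e_s - e_z]. For the tail group, overwrite
    one site of a configuration by [z]. For the local group on the cube of
    radius 3 around a pattern of some [x], overwrite [x] by [z] on the cube of
    radius 2 and put an arbitrary [s] at the origin: condition (ii) makes the
    origin legal and locality of the rule glues this into a configuration
    [w_s] of [X] with the same boundary, so that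
    [Psi(a, w_s) - Psi(a, w_z) = e_s - e_z]. *)

From mathcomp Require Import all_boot all_order all_algebra.
From mathcomp Require Import finmap zify.
Set Implicit Arguments. Unset Strict Implicit. Unset Printing Implicit Defensive.
Import GRing.Theory.
Local Open Scope ring_scope.

Section Cubes.
Variable d : nat.

Lemma coord_le_supnorm (k : site d) i : (absz (k ord0 i) <= supnorm k)%N.
Proof. by rewrite /supnorm (bigD1 i) //= leq_maxl. Qed.

Lemma supnormD (a b : site d) : (supnorm (a + b)%R <= supnorm a + supnorm b)%N.
Proof.
apply/bigmax_leqP => i _; rewrite mxE.
apply: leq_trans (leq_add (coord_le_supnorm a i) (coord_le_supnorm b i)).
by have := leqD_dist (a ord0 i) 0 (- b ord0 i); rewrite subr0 sub0r !opprK.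
Qed.

Lemma supnormN (a : site d) : supnorm (- a) = supnorm a.
Proof. by apply: eq_bigr => i _; rewrite mxE abszN. Qed.

Lemma supnorm0 : supnorm (0 : site d) = 0%N.
Proof. by apply/eqP; rewrite -leqn0; apply/bigmax_leqP => i _; rewrite mxE. Qed.

Definition cube (r : nat) : {fset site d} :=
  [fset (\row_i ((v ord0 i : nat)%:Z - r%:Z)) | v : 'rV['I_(r + r).+1]_d in predT]%fset.

Lemma in_cube r (k : site d) : (k \in cube r) = (supnorm k <= r)%N.
Proof.
apply/imfsetP/bigmax_leqP => /= [[v _ ->] i _ | kr].
  by rewrite mxE; have := ltn_ord (v ord0 i); lia.
exists (\row_i inord (absz (k ord0 i + r%:Z))) => //.
apply/rowP => i; rewrite !mxE -[k 0 i]/(k ord0 i) inordK; have := kr i isT; lia.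
Qed.

Lemma cube0 r : 0 \in cube r.
Proof. by rewrite in_cube supnorm0. Qed.

Lemma boundary_cubeS r j : boundary (fmem (cube r.+1)) j -> (r < supnorm j)%N.
Proof.
move=> [_ not_int]; rewrite ltnNge; apply/negP => jr; apply: not_int.
split=> [|k jk]; rewrite /fmem in_cube; first exact: ltnW.
by rewrite -(subrK j k) (leq_trans (supnormD _ _)) // (leq_add jk jr).
Qed.

End Cubes.

Section GeneratedSubgroup.
Variables (V : zmodType) (P : V -> Prop).

Lemma gen_opp v : gen P v -> gen P (- v).
Proof. by move=> Pv; rewrite -sub0r; apply: gen_sub (gen_0 _) Pv. Qed.

Lemma gen_add u v : gen P u -> gen P v -> gen P (u + v).
Proof. by move=> Pu Pv; rewrite -[v]opprK; apply: gen_sub Pu (gen_opp Pv). Qed.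

Lemma gen_sum (I : eqType) (r : seq I) (F : I -> V) :
  (forall i, i \in r -> gen P (F i)) -> gen P (\sum_(i <- r) F i).
Proof.
elim: r => [|i r IHr] Pr; first by rewrite big_nil; apply: gen_0.
rewrite big_cons; apply: gen_add; first by apply: Pr; rewrite inE eqxx.
by apply: IHr => j rj; apply: Pr; rewrite inE rj orbT.
Qed.

Lemma gen_min (Q : V -> Prop) v : (forall w, P w -> gen Q w) -> gen P v -> gen Q v.
Proof. by move=> PQ; elim=> [w /PQ | | u w _ Qu _ Qw]; [| apply: gen_0 | apply: gen_sub]. Qed.

End GeneratedSubgroup.

Lemma gen_PsiF (S : finType) (d : nat) (z : S) (P : {ffun S -> int} -> Prop)
    (F : {fset site d}) (a b : site d -> S) :
  (forall j, j \in F -> gen P (sharp (a j) - sharp z)) ->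
  (forall j, j \in F -> gen P (sharp (b j) - sharp z)) ->
  gen P (PsiF F a b).
Proof.
move=> Pa Pb; apply: gen_sum => j Fj.
have -> : sharp (b j) - sharp (a j) = (sharp (b j) - sharp z) - (sharp (a j) - sharp z).
  by rewrite opprB addrA subrK.
by apply: gen_sub; [apply: Pb | apply: Pa].
Qed.

Section MarkovShift.
Variables (S : finType) (d : nat) (A : S -> (site d -> S) -> Prop).
Hypothesis locA : local_rule A.
Local Notation X := (TMS A).

Lemma TMS_local (w : site d -> S) :
  (forall k, exists2 u, X u & forall j, (supnorm j <= 1)%N -> w (k + j) = u (k + j)) ->
  X w.
Proof.
move=> near_X k; have [u Xu wu] := near_X k.
have -> : w k = u k by rewrite -[k]addr0 wu ?supnorm0.
refine (iffLR (locA _ _) (Xu k)) => j [j1 _].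
by rewrite /ball subr0 in j1; rewrite wu.
Qed.

Lemma TMS_ext u w : X u -> (forall i, u i = w i) -> X w.
Proof. by move=> Xu uw; apply: TMS_local => k; exists u => // j _; rewrite uw. Qed.

Lemma TMS_shift u t : X u -> X (fun i => u (i + t)).
Proof.
by move=> Xu k; refine (iffLR (locA _ _) (Xu (k + t))) => j _; rewrite addrAC.
Qed.

Variable z : S.
Hypothesis free_z : forall x, X x -> X (fun i => if i == 0 then z else x i).
Hypothesis fill_z : forall a, pattern_in X (ball 0 1) a ->
  (forall i, ball 0 1 i -> i != 0 -> a i = z) ->
  forall s, pattern_in X (ball 0 1) (fun i => if i == 0 then s else a i).

Lemma TMS_set u j : X u -> X (fun i => if i == j then z else u i).
Proof.
move=> Xu; apply: TMS_ext (TMS_shift (- j) (free_z (TMS_shift j Xu))) _ => i /=.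
by rewrite subrK subr_eq0.
Qed.

Lemma TMS_set_seq (l : seq (site d)) u : X u -> X (fun i => if i \in l then z else u i).
Proof.
move=> Xu; elim: l => [|j l IHl] //.
by apply: TMS_ext (TMS_set j IHl) _ => i; rewrite inE; case: (i == j).
Qed.

Lemma TMS_fill_cube x s : X x ->
  X (fun i => if i == 0 then s else if i \in cube d 2 then z else x i).
Proof.
move=> Xx; set w := fun i => _.
pose x2 i := if i \in cube d 2 then z else x i.
have Xx2 : X x2 by apply: TMS_set_seq.
have [y [Xy yw]] : pattern_in X (ball 0 1) w.
  apply: fill_z => [|i i1 _]; first by exists x2.
  by rewrite /ball subr0 in i1; rewrite /x2 in_cube (leq_trans i1).
(* [y2] agrees with [w] on the cube of radius 2 and [x2] agrees with [w] off
   the origin; every unit ball lies in one of these two regions. *)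
pose y2 i := if i \in (cube d 2 `\` cube d 1)%fset then z else y i.
have Xy2 : X y2 by apply: TMS_set_seq.
have y2w i : (supnorm i <= 2)%N -> y2 i = w i.
  move=> i2; rewrite /y2 /w inE !in_cube i2 andbT.
  have [i1|i1] := leqP (supnorm i) 1 => /=.
    by rewrite yw /ball ?subr0 // /w in_cube i2.
  by rewrite ifN //; apply: contraTneq i1 => ->; rewrite supnorm0.
apply: TMS_local => k; case: (leqP (supnorm k) 1) => k1.
  by exists y2 => // j j1; rewrite y2w // (leq_trans (supnormD k j)) ?(leq_add k1 j1).
exists x2 => // j j1; rewrite /w ifN //; apply: contraTneq k1 => /eqP.
by rewrite addr_eq0 => /eqP ->; rewrite supnormN -leqNgt.
Qed.

Lemma sharpB_in_H_sharp u j : X u -> H_sharp X (sharp (u j) - sharp z).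
Proof.
move=> Xu; rewrite -opprB; apply/gen_opp/gen_in.
exists u, (fun i => if i == j then z else u i); do !split=> //; first exact: TMS_set.
exists [fset j]%fset; split=> [i|]; first by rewrite in_fset1 => /negbTE ->.
by rewrite /PsiF big_seq_fset1 eqxx.
Qed.

Definition boundary_gen (F : {fset site d}) (a : site d -> S) : {ffun S -> int} -> Prop :=
  gen (fun w => exists b, pattern_in X (fmem F) b /\
         (forall j, boundary (fmem F) j -> a j = b j) /\ w = PsiF F a b).

Lemma sharpB_in_boundary_gen a s : pattern_in X (fmem (cube d 3)) a ->
  boundary_gen (cube d 3) a (sharp s - sharp z).
Proof.
move=> [x [Xx xa]].
pose w t i := if i == 0 then t else if i \in cube d 2 then z else x i.
have Psi_w t : boundary_gen (cube d 3) a (PsiF (cube d 3) a (w t)).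
  apply: gen_in; exists (w t); split; first by exists (w t); split=> //; apply: TMS_fill_cube.
  split=> // j bj; have j2 := boundary_cubeS bj.
  rewrite -xa; last by case: bj.
  rewrite /w in_cube leqNgt j2 /= ifN //.
  by apply: contraTneq j2 => ->; rewrite supnorm0.
have := gen_sub (Psi_w s) (Psi_w z); congr gen.
rewrite /PsiF -sumrB (bigD1_seq 0) ?cube0 ?fset_uniq //= big1 => [|j /negbTE j0].
  by rewrite /w eqxx addr0 opprB addrA subrK.
by rewrite /w j0 opprB addrA subrK subrr.
Qed.

Lemma cond_mho_of_free_symbol : cond_mho X.
Proof.
exists (cube d 3) => a a3 v; split; apply: gen_min => w.
  move: a3 => [x [Xx xa]] [b [[y [Xy yb]] [_ ->]]].
  apply: (gen_PsiF (z := z)) => j Fj; [rewrite -(xa j Fj) | rewrite -(yb j Fj)];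
  exact: sharpB_in_H_sharp.
move=> [x [y [_ [_ [F [_ ->]]]]]].
by apply: (gen_PsiF (z := z)) => j _; apply: sharpB_in_boundary_gen.
Qed.

End MarkovShift.

Theorem proposition3p2 (S : finType) (d : nat) (A : S -> (site d -> S) -> Prop) :
  local_rule A -> cond_maltese (TMS A) -> cond_mho (TMS A).
Proof.
move=> locA [Z [/set0Pn[z zZ] [freeZ fillZ]]].
apply: (cond_mho_of_free_symbol locA (z := z)) => [x Xx | a Xa az s].
  exact: freeZ.
by apply: fillZ => // i i1 i0; rewrite az.
Qed.
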